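(* Fix $\delta\in[0,1/2]$. Alice flips two independent coins $c_1,c_2\in\{0,1\}$ with $\Pr[c_1=0]=\Pr[c_2=0]=\tfrac12+\delta$. Bob, without knowledge of $c_1,c_2$, sends Alice a classical bit $b$ and a single-qubit state $\rho$ (where $b$ may be chosen at random with probabilities $q_0,q_1$ and the state $\rho_b$ may depend on $b$). Alice measures $\rho$ in the computational basis $\{|0\rangle,|1\rangle\}$ if $c_1=0$ and in the Hadamard basis $\{|+\rangle,|-\rangle\}$ if $c_1=1$, obtaining $a\in\{0,1\}$. Bob wins if $a=b$ when $c_2=0$, and $a\ne b$ when $c_2=1$. Then Bob's maximal winning probability over all strategies is $$\frac12+\delta\sqrt{\frac{1+4\delta^2}{2}},$$ achieved by the deterministic strategy $b=0$ with $\rho=\tfrac12(I+r_x\sigma_x+r_z\sigma_z)$, $r_x=\frac{1-2\delta}{\sqrt{2+8\delta^2}}$, $r_z=\frac{1+2\delta}{\sqrt{2+8\delta^2}}$. In particular the value is $1/2$ for $\delta=0$ and $1$ for $\delta=1/2$.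
   Context: $|\pm\rangle=\tfrac{1}{\sqrt2}(|0\rangle\pm|1\rangle)$; measurement outcome $0$ corresponds to $|0\rangle$ or $|+\rangle$ and $1$ to $|1\rangle$ or $|-\rangle$; $\sigma_x,\sigma_z$ are Pauli matrices. *)

From HB Require Import structures.
From mathcomp Require Import all_boot all_order all_algebra.
From mathcomp Require Import complex.
Set Implicit Arguments. Unset Strict Implicit. Unset Printing Implicit Defensive.
Import Order.TTheory GRing.Theory Num.Theory.
Local Open Scope ring_scope.
Local Open Scope complex_scope.

Section Qubit.
Variable R : rcfType.
Local Notation C := R[i].

Definition adjmx m n (A : 'M[C]_(m, n)) : 'M[C]_(n, m) :=
  \matrix_(i < n, j < m) (A j i)^*.

(* single-qubit density matrix: positive semidefinite (v^dagger rho v >= 0 in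
   the order of C, i.e. real and nonnegative, for every v) with unit trace *)
Definition is_density (rho : 'M[C]_2) : Prop :=
  (forall v : 'cV[C]_2, 0 <= (adjmx v *m rho *m v) 0 0) /\ \tr rho = 1.

Definition ket0 : 'cV[C]_2 := \col_(i < 2) (if i == 0 then 1 else 0).
Definition ket1 : 'cV[C]_2 := \col_(i < 2) (if i == 0 then 0 else 1).
Definition invsqrt2 : C := ((Num.sqrt (2 : R))^-1)%:C.
Definition ketp : 'cV[C]_2 := invsqrt2 *: (ket0 + ket1).
Definition ketm : 'cV[C]_2 := invsqrt2 *: (ket0 - ket1).

Definition outcome_vec (c1 a : bool) : 'cV[C]_2 :=
  if c1 then (if a then ketm else ketp) else (if a then ket1 else ket0).

(* Born-rule probability <e| rho |e> (real part; it is real for a density matrix) *)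
Definition born (e : 'cV[C]_2) (rho : 'M[C]_2) : R :=
  @complex.Re R ((adjmx e *m rho *m e) 0 0).

Definition sigma_x : 'M[C]_2 :=
  \matrix_(i < 2, j < 2) (if i == j then 0 else 1).
Definition sigma_z : 'M[C]_2 :=
  \matrix_(i < 2, j < 2) (if i == j then (if i == 0 then 1 else -1) else 0).

Definition coin (delta : R) (c : bool) : R :=
  if c then 1/2 - delta else 1/2 + delta.

Definition strategy (q : bool -> R) (rho : bool -> 'M[C]_2) : Prop :=
  (forall b, 0 <= q b) /\ q false + q true = 1 /\ (forall b, is_density (rho b)).

(* Bob wins iff a = b xor c2 *)
Definition win_prob (delta : R) (q : bool -> R) (rho : bool -> 'M[C]_2) : R :=
  \sum_(c1 : bool) \sum_(c2 : bool) \sum_(b : bool)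
    coin delta c1 * coin delta c2 * q b * born (outcome_vec c1 (addb b c2)) (rho b).

Definition opt_value (delta : R) : R :=
  1/2 + delta * Num.sqrt ((1 + 4 * delta ^+ 2) / 2).

Definition opt_rx (delta : R) : R := (1 - 2 * delta) / Num.sqrt (2 + 8 * delta ^+ 2).
Definition opt_rz (delta : R) : R := (1 + 2 * delta) / Num.sqrt (2 + 8 * delta ^+ 2).

Definition opt_rho (delta : R) : 'M[C]_2 :=
  (1/2) *: (1%:M + (opt_rx delta)%:C *: sigma_x + (opt_rz delta)%:C *: sigma_z).

Definition opt_q (b : bool) : R := if b then 0 else 1.
End Qubit.

(** The winning probability is affine in Bob's choices: writing each state in
    Bloch coordinates [(x, z)], it equals
    [q_0 (1/2 + delta L(rho_0)) + q_1 (1/2 - delta L(rho_1))] with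
    [L(rho) = (1/2 + delta) z + (1/2 - delta) x].  Positivity of [rho] gives
    [x^2 + z^2 <= 1], so by Cauchy-Schwarz [|L| <= sqrt((1 + 4 delta^2)/2)],
    and the bound is attained by the unit Bloch vector parallel to
    [(1/2 - delta, 1/2 + delta)]. *)
From HB Require Import structures.
From mathcomp Require Import all_boot all_order all_algebra.
From mathcomp Require Import complex.
From mathcomp Require Import ring lra.
Import Order.TTheory GRing.Theory Num.Theory.
Local Open Scope ring_scope.
Local Open Scope complex_scope.

Lemma cauchy_schwarz2_sqrt (R : rcfType) (a b u v : R) :
  u ^+ 2 + v ^+ 2 <= 1 -> `|a * u + b * v| <= Num.sqrt (a ^+ 2 + b ^+ 2).
Proof.
move=> huv; rewrite -sqrtr_sqr ler_sqrt ?addr_ge0 ?sqr_ge0 //.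
have lagrange : (a * u + b * v) ^+ 2 + (a * v - b * u) ^+ 2
                = (a ^+ 2 + b ^+ 2) * (u ^+ 2 + v ^+ 2) by ring.
have := ler_wpM2l (addr_ge0 (sqr_ge0 a) (sqr_ge0 b)) huv.
have := sqr_ge0 (a * v - b * u).
nra.
Qed.

Section Qubit.
Variable R : rcfType.
Implicit Types (rho : 'M[R[i]]_2) (delta : R).
Local Notation C := R[i].

Definition col2 (x y : C) : 'cV[C]_2 := \col_(i < 2) (if i == 0 then x else y).

Definition sym2 (a b c : R) : 'M[C]_2 :=
  \matrix_(i < 2, j < 2) (if i == 0 then (if j == 0 then a%:C else b%:C)
                          else (if j == 0 then b%:C else c%:C)).

Definition bloch_x (rho : 'M[C]_2) : R :=
  complex.Re (rho 0 1) + complex.Re (rho 1 0).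
Definition bloch_z (rho : 'M[C]_2) : R :=
  complex.Re (rho 0 0) - complex.Re (rho 1 1).

Definition score (delta : R) (rho : 'M[C]_2) : R :=
  (1/2 + delta) * bloch_z rho + (1/2 - delta) * bloch_x rho.

Definition bloch_state (x z : R) : 'M[C]_2 :=
  (1/2) *: (1%:M + x%:C *: sigma_x R + z%:C *: sigma_z R).

Lemma ord2_cases (i : 'I_2) : i = 0 \/ i = 1.
Proof. by case: i => -[|[|//]] ?; [left|right]; apply/val_inj. Qed.

Lemma col2_eta (v : 'cV[C]_2) : v = col2 (v 0 0) (v 1 0).
Proof.
by apply/matrixP=> i j; rewrite !mxE (ord1 j); case: (ord2_cases i) => ->.
Qed.

Lemma ket0E : ket0 R = col2 1 0.
Proof. by apply/matrixP=> i j; rewrite !mxE. Qed.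

Lemma ket1E : ket1 R = col2 0 1.
Proof. by apply/matrixP=> i j; rewrite !mxE. Qed.

Lemma ketpE : ketp R = col2 (Num.sqrt 2)^-1%:C (Num.sqrt 2)^-1%:C.
Proof.
apply/matrixP=> i j; rewrite !mxE /invsqrt2.
by case: (ord2_cases i) => ->; rewrite /= ?addr0 ?add0r mulr1.
Qed.

Lemma ketmE : ketm R = col2 (Num.sqrt 2)^-1%:C (- (Num.sqrt 2)^-1)%:C.
Proof.
apply/matrixP=> i j; rewrite !mxE /invsqrt2.
by case: (ord2_cases i) => ->; rewrite /= ?subr0 ?sub0r ?mulr1 // mulrN1 rmorphN.
Qed.

Lemma quad_col2 (x y : C) (rho : 'M[C]_2) :
  (adjmx (col2 x y) *m rho *m col2 x y) 0 0 =
  x^* * (rho 0 0 * x + rho 0 1 * y) + y^* * (rho 1 0 * x + rho 1 1 * y).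
Proof.
rewrite !mxE !big_ord_recl !big_ord0 /= !mxE !big_ord_recl !big_ord0 /= !mxE /=.
have -> : lift ord0 ord0 = 1 :> 'I_2 by apply/val_inj.
have -> : ord0 = 0 :> 'I_2 by apply/val_inj.
ring.
Qed.

Lemma born_col2 (x y : R) (rho : 'M[C]_2) :
  born (col2 x%:C y%:C) rho =
  x ^+ 2 * complex.Re (rho 0 0) + x * y * bloch_x rho + y ^+ 2 * complex.Re (rho 1 1).
Proof.
rewrite /born quad_col2 /bloch_x.
move: (rho 0 0) (rho 0 1) (rho 1 0) (rho 1 1) => [a1 a2] [b1 b2] [c1 c2] [d1 d2].
by rewrite -!complexr0; simpc; rewrite /=; ring.
Qed.

Lemma quad_sym2 (x1 x2 y1 y2 a b c : R) :
  (adjmx (col2 (x1 +i* x2) (y1 +i* y2)) *m sym2 a b c *m col2 (x1 +i* x2) (y1 +i* y2)) 0 0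
  = (a * (x1 ^+ 2 + x2 ^+ 2) + 2 * b * (x1 * y1 + x2 * y2) + c * (y1 ^+ 2 + y2 ^+ 2)) +i* 0.
Proof.
rewrite quad_col2 !mxE /= -!complexr0; simpc.
by apply/eqP; rewrite eq_complex /=; apply/andP; split; apply/eqP; ring.
Qed.

Lemma mxtrace2 (rho : 'M[C]_2) : \tr rho = rho 0 0 + rho 1 1.
Proof.
rewrite /mxtrace !big_ord_recl big_ord0 addr0.
by have -> : lift ord0 ord0 = 1 :> 'I_2 by apply/val_inj.
Qed.

Lemma Re_diag_sum {rho} :
  \tr rho = 1 -> complex.Re (rho 0 0) + complex.Re (rho 1 1) = 1.
Proof. by rewrite mxtrace2 => /(congr1 (@complex.Re R)); rewrite raddfD. Qed.

Lemma density_born_ge0 {rho} (v : 'cV[C]_2) :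
  is_density rho -> 0 <= born v rho.
Proof. by move=> [/(_ v) + _]; rewrite lecE => /andP[]. Qed.

Lemma density_bloch_norm {rho} :
  is_density rho -> bloch_x rho ^+ 2 + bloch_z rho ^+ 2 <= 1.
Proof.
move=> hrho; have := Re_diag_sum hrho.2.
rewrite /bloch_z; set A := complex.Re _; set D := complex.Re _ => hAD.
set W := bloch_x rho.
have born_ge0 u t : 0 <= u ^+ 2 * A + u * t * W + t ^+ 2 * D.
  by rewrite -born_col2; apply: density_born_ge0.
(* [W^2 <= 4 A D]: evaluate the form at [(-W, 2A)] and [(2D, -W)]. *)
have := born_ge0 (- W) (2 * A); have := born_ge0 (2 * D) (- W).
nra.
Qed.

Lemma score_le delta {rho} : is_density rho ->
  `|score delta rho| <= Num.sqrt ((1 + 4 * delta ^+ 2) / 2).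
Proof.
move=> /density_bloch_norm hrho.
have -> : (1 + 4 * delta ^+ 2) / 2 = (1/2 + delta) ^+ 2 + (1/2 - delta) ^+ 2 by field.
by apply: cauchy_schwarz2_sqrt; rewrite addrC.
Qed.

Lemma win_probE (delta : R) (q : bool -> R) (rho : bool -> 'M[C]_2) :
  (forall b, \tr (rho b) = 1) ->
  win_prob delta q rho = q false * (1/2 + delta * score delta (rho false))
                         + q true * (1/2 - delta * score delta (rho true)).
Proof.
move=> htr.
have D0 : complex.Re (rho false 1 1) = 1 - complex.Re (rho false 0 0).
  by have := Re_diag_sum (htr false); lra.
have D1 : complex.Re (rho true 1 1) = 1 - complex.Re (rho true 0 0).
  by have := Re_diag_sum (htr true); lra.
have s2 : (Num.sqrt 2)^-1 ^+ 2 = 1/2 :> R by rewrite exprVn sqr_sqrtr // mul1r.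
rewrite /win_prob !big_bool /= /coin /outcome_vec /= ket0E ket1E ketpE ketmE.
rewrite !born_col2 !mulrN !sqrrN -!expr2 s2 /score /bloch_z D0 D1.
by field.
Qed.

Lemma win_prob_le (delta : R) (q : bool -> R) (rho : bool -> 'M[C]_2) :
  0 <= delta -> strategy q rho -> win_prob delta q rho <= opt_value delta.
Proof.
move=> hd [hq [hq1 hrho]].
rewrite win_probE => [|b]; last exact: (hrho b).2.
have := score_le delta (hrho false); have := score_le delta (hrho true).
rewrite /opt_value; set S := Num.sqrt _ => /ler_normlP[h1 _] /ler_normlP[_ h0].
have c0 : delta * score delta (rho false) <= delta * S by apply: ler_wpM2l.
have c1 : - (delta * score delta (rho true)) <= delta * S.
  by rewrite -mulrN; apply: ler_wpM2l.
have := hq false; have := hq true; nra.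
Qed.

Lemma bloch_stateE (x z : R) :
  bloch_state x z = sym2 ((1 + z) / 2) (x / 2) ((1 - z) / 2).
Proof.
have halfC : (1/2 : C) = (1/2 : R)%:C by rewrite rmorphM rmorph1 fmorphV rmorph_nat.
have oneC : (1 : C) = 1%:C by [].
apply/matrixP=> i j; rewrite !mxE halfC.
by case: (ord2_cases i) => ->; case: (ord2_cases j) => -> /=;
  rewrite ?mulr0 ?mulr1 ?mulr1n ?addr0 ?add0r ?mulrN1 ?oneC -?rmorphN -?rmorphD -?rmorphM;
  apply/eqP; rewrite eq_complex /= eqxx andbT; apply/eqP; field.
Qed.


Lemma sym2_psd (a b c : R) (v : 'cV[C]_2) :
  0 <= a -> 0 <= c -> b ^+ 2 <= a * c ->
  0 <= (adjmx v *m sym2 a b c *m v) 0 0.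
Proof.
move=> ha hc hb; rewrite (col2_eta v).
case: (v 0 0) (v 1 0) => [x1 x2] [y1 y2]; rewrite quad_sym2 lecE /= eqxx /=.
have [a0|a_neq0] := eqVneq a 0.
  have b0 : b = 0.
    by move: hb; rewrite a0 mul0r => hb; apply/eqP; rewrite -sqrf_eq0 eq_le hb sqr_ge0.
  rewrite a0 b0 mulr0 !mul0r !add0r.
  by apply: mulr_ge0 => //; rewrite addr_ge0 ?sqr_ge0.
have a_pos : 0 < a by rewrite lt_def a_neq0.
set Q := (X in 0 <= X).
(* completing the square in [x] *)
have aQ : a * Q = (a * x1 + b * y1) ^+ 2 + (a * x2 + b * y2) ^+ 2
                  + (a * c - b ^+ 2) * (y1 ^+ 2 + y2 ^+ 2) by rewrite /Q; ring.
rewrite -(pmulr_rge0 _ a_pos) aQ.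
rewrite !addr_ge0 ?sqr_ge0 //.
by apply: mulr_ge0; rewrite ?subr_ge0 ?addr_ge0 ?sqr_ge0.
Qed.

Lemma bloch_state_density (x z : R) :
  x ^+ 2 + z ^+ 2 <= 1 -> is_density (bloch_state x z).
Proof.
move=> hxz; rewrite bloch_stateE; split => [v|].
  by apply: sym2_psd; nra.
by rewrite mxtrace2 !mxE /= -rmorphD; apply: (congr1 (real_complex R)); field.
Qed.

Lemma score_bloch_state (delta x z : R) :
  score delta (bloch_state x z) = (1/2 + delta) * z + (1/2 - delta) * x.
Proof. by rewrite /score /bloch_x /bloch_z bloch_stateE !mxE /=; field. Qed.

Lemma opt_bloch_unit (delta : R) : opt_rx delta ^+ 2 + opt_rz delta ^+ 2 = 1.
Proof.
have hT2 : Num.sqrt (2 + 8 * delta ^+ 2) ^+ 2 = 2 + 8 * delta ^+ 2.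
  by rewrite sqr_sqrtr //; nra.
by rewrite /opt_rx /opt_rz !expr_div_n hT2; field; nra.
Qed.

Lemma opt_score (delta : R) :
  (1/2 + delta) * opt_rz delta + (1/2 - delta) * opt_rx delta
  = Num.sqrt ((1 + 4 * delta ^+ 2) / 2).
Proof.
set T := Num.sqrt (2 + 8 * delta ^+ 2).
have hT2 : T ^+ 2 = 2 + 8 * delta ^+ 2 by rewrite sqr_sqrtr //; nra.
have hT0 : 0 < T by rewrite sqrtr_gt0; nra.
(* [(1 + 4 delta^2)/2 = ((1 + 4 delta^2)/T)^2] since [T^2 = 2 (1 + 4 delta^2)] *)
have -> : (1 + 4 * delta ^+ 2) / 2 = ((1 + 4 * delta ^+ 2) / T) ^+ 2.
  by rewrite expr_div_n hT2; field; nra.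
rewrite sqrtr_sqr ger0_norm; last by apply: divr_ge0; nra.
by rewrite /opt_rx /opt_rz -/T; field; rewrite gt_eqF.
Qed.

End Qubit.

Theorem mainTheorem6 (R : rcfType) (delta : R) (hd0 : 0 <= delta) (hd1 : delta <= 1/2) :
  (forall (q : bool -> R) (rho : bool -> 'M[R[i]]_2),
      strategy q rho -> win_prob delta q rho <= opt_value delta)
  /\ strategy (@opt_q R) (fun _ => opt_rho delta)
  /\ win_prob delta (@opt_q R) (fun _ => opt_rho delta) = opt_value delta
  /\ opt_value (0 : R) = 1/2
  /\ opt_value (1/2 : R) = 1.
Proof.
have opt_density : is_density (opt_rho delta).
  by apply: bloch_state_density; rewrite opt_bloch_unit.
split; first by move=> q rho; apply: win_prob_le.
split; first by split; [case | split; [rewrite /opt_q addr0 | ]].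
split.
  rewrite win_probE => [|_]; last exact: opt_density.2.
  rewrite /opt_rho -/(bloch_state _ _) score_bloch_state opt_score.
  by rewrite /opt_q mul1r mul0r addr0.
split; first by rewrite /opt_value mul0r addr0.
rewrite /opt_value; have -> : (1 + 4 * (1/2 : R) ^+ 2) / 2 = 1 by field.
by rewrite sqrtr1 mulr1; field.
Qed.
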